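(* Let $q \ge 2$, $n \ge 1$ and $k \ge 0$ be integers, and let $\alpha_{i,j}$ be as defined in the context. Then $$\alpha_{k+2,k+1} = (k+1)(2q-1) - (q-1)n.$$
   Context: Let $g(y) = \dfrac{y(1-y)}{(1+(q-1)y)^2}$, a formal power series in $y$ with $g(0)=0$ and $g'(0) = 1 \ne 0$. For each integer $j \ge 0$, the formal power series $y^j (1+(q-1)y)^{-n}$ can be uniquely expanded as $\sum_{i \ge 0} \alpha_{i,j}\, g(y)^i$; this defines the real numbers $\alpha_{i,j}$. (Equivalently, these are the coefficients in $c_i = \sum_{j \le i} \alpha_{i,j} A_j$ relating the weight distribution $A_0,\dots,A_n$ of a pure state to the coefficients $c_i$ of its expansion $A(x,y)=\sum_{i=0}^{\lfloor n/2\rfloor} c_i (x+(q-1)y)^{n-2i}(y(x-y))^i$.) *)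

From HB Require Import structures.
From mathcomp Require Import all_boot all_order all_algebra.
Set Implicit Arguments. Unset Strict Implicit. Unset Printing Implicit Defensive.
Import Order.TTheory GRing.Theory Num.Theory.
Local Open Scope ring_scope.

(* Formal power series over R, represented by their coefficient sequences:
   f m is the coefficient of y^m. *)
Definition fps (R : nzRingType) := nat -> R.

Section FPS.
Variable R : comNzRingType.

Definition fps_one : fps R := fun m => (m == 0)%N%:R.
Definition fps_X : fps R := fun m => (m == 1)%N%:R.
Definition fps_mul (f g : fps R) : fps R :=
  fun m => \sum_(i < m.+1) f i * g (m - i)%N.
Definition fps_exp (f : fps R) (e : nat) : fps R := iter e (fps_mul f) fps_one.

(* (1 + (q-1) y)^{-1} = sum_m (-(q-1))^m y^m *)
Definition inv_lin (q : nat) : fps R := fun m => (- (q%:R - 1)) ^+ m.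

(* g(y) = y (1 - y) / (1 + (q-1) y)^2 *)
Definition gser (q : nat) : fps R :=
  fps_mul (fun m => (m == 1)%N%:R - (m == 2)%N%:R) (fps_exp (inv_lin q) 2).

Definition fser (q n j : nat) : fps R :=
  fps_mul (fps_exp fps_X j) (fps_exp (inv_lin q) n).

(* The formal series sum_{i>=0} a_i g^i, for g with g(0) = 0
   (so only i <= m contribute to the coefficient of y^m). *)
Definition comp_sum (a : nat -> R) (g : fps R) : fps R :=
  fun m => \sum_(i < m.+1) a i * fps_exp g i m.

Definition is_expansion (g f : fps R) (a : nat -> R) : Prop :=
  forall m, f m = comp_sum a g m.

(* alpha_{.,j} for given q, n: the coefficient family of the expansion of
   y^j (1+(q-1)y)^{-n} in powers of g(y). *)
Definition is_alpha (q n j : nat) (a : nat -> R) : Prop :=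
  is_expansion (gser q) (fser q n j) a.
End FPS.

(* Since g(y) = y - (2q-1) y^2 + O(y^3), the matrix expressing the powers g^i
   in the monomials y^m is unitriangular, with g^i = y^i + i g_2 y^(i+1) + ...
   Hence the expansion of f = y^(k+1) (1 - n(q-1) y + ...) starts at g^(k+1)
   with a_(k+1) = 1, and comparing the coefficients of y^(k+2) gives
   a_(k+2) = -n(q-1) - (k+1) g_2. *)

From HB Require Import structures.
From mathcomp Require Import all_boot all_order all_algebra ring zify.
Import Order.TTheory GRing.Theory Num.Theory.
Local Open Scope ring_scope.

Set Implicit Arguments.
Unset Strict Implicit.
Unset Printing Implicit Defensive.

Section PowerSeries.
Variable R : comNzRingType.
Implicit Types f g h : fps R.

Lemma fps_mul0 f g : fps_mul f g 0 = f 0%N * g 0%N.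
Proof. by rewrite /fps_mul big_ord_recr big_ord0 /= add0r. Qed.

Lemma fps_mul1 f g : fps_mul f g 1 = f 0%N * g 1%N + f 1%N * g 0%N.
Proof. by rewrite /fps_mul !big_ord_recr big_ord0 /= add0r. Qed.

Lemma fps_mul2 f g :
  fps_mul f g 2 = f 0%N * g 2%N + f 1%N * g 1%N + f 2%N * g 0%N.
Proof. by rewrite /fps_mul !big_ord_recr big_ord0 /= add0r. Qed.

Lemma fps_expS g i : fps_exp g i.+1 = fps_mul g (fps_exp g i).
Proof. by []. Qed.

Lemma fps_exp_coef0 h n : h 0%N = 1 -> fps_exp h n 0 = 1.
Proof.
by move=> h0; elim: n => [|n IH] //; rewrite fps_expS fps_mul0 IH h0 mulr1.
Qed.

Lemma fps_exp_coef1 h n : h 0%N = 1 -> fps_exp h n 1 = n%:R * h 1%N.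
Proof.
move=> h0; elim: n => [|n IH]; first by rewrite /= /fps_one mul0r.
by rewrite fps_expS fps_mul1 IH h0 fps_exp_coef0 // mulrSr; ring.
Qed.

Section PositiveValuation.
Variable g : fps R.
Hypothesis g0 : g 0%N = 0.

Lemma fps_exp_coef_lt i m : (m < i)%N -> fps_exp g i m = 0.
Proof.
elim: i m => [|i IH] m // hm.
rewrite fps_expS /fps_mul big1 // => -[[|t] ht] _ /=; first by rewrite g0 mul0r.
by rewrite IH ?mulr0 //; lia.
Qed.

Hypothesis g1 : g 1%N = 1.

Lemma fps_exp_coef_diag i : fps_exp g i i = 1.
Proof.
elim: i => [|i IH]; first by rewrite /= /fps_one.
rewrite fps_expS /fps_mul 2!big_ord_recl /= g0 g1 mul0r add0r mul1r subn1 IH.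
rewrite big1 ?addr0 // => -[t ht] _.
by rewrite fps_exp_coef_lt ?mulr0 // /bump /=; lia.
Qed.

Lemma fps_exp_coef_succ i : fps_exp g i i.+1 = i%:R * g 2%N.
Proof.
elim: i => [|i IH]; first by rewrite /= /fps_one mul0r.
rewrite fps_expS /fps_mul 3!big_ord_recl /= g0 g1 mul0r add0r mul1r.
rewrite subn1 /= subSS subn1 /= IH fps_exp_coef_diag.
rewrite big1 ?addr0 ?mulr1 ?mulrSr ?mulrDl ?mul1r // => -[t ht] _.
by rewrite fps_exp_coef_lt ?mulr0 // /bump /=; lia.
Qed.

Lemma expansion_coef_rec f a :
  is_expansion g f a -> forall m, a m = f m - \sum_(i < m) a i * fps_exp g i m.
Proof.
move=> fa m; rewrite fa /comp_sum big_ord_recr /= fps_exp_coef_diag mulr1.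
by rewrite addrC addrK.
Qed.

Fixpoint expansion_prefix f m : seq R :=
  if m is m'.+1 then
    let s := expansion_prefix f m' in
    rcons s (f m' - \sum_(i < m') s`_i * fps_exp g i m')
  else [::].

Lemma size_expansion_prefix f m : size (expansion_prefix f m) = m.
Proof. by elim: m => //= m IH; rewrite size_rcons IH. Qed.

Lemma nth_expansion_prefix f i m :
  (i < m)%N -> (expansion_prefix f m)`_i = (expansion_prefix f i.+1)`_i.
Proof.
elim: m => // m IH lt_i_Sm.
rewrite /= nth_rcons size_expansion_prefix.
case: ltnP => [lt_im|le_mi]; first by rewrite IH.
have -> : i = m by lia.
by rewrite /= nth_rcons size_expansion_prefix ltnn eqxx.
Qed.

Lemma expansion_exists f : exists a, is_expansion g f a.
Proof.
exists (fun i => (expansion_prefix f i.+1)`_i) => m.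
rewrite /comp_sum big_ord_recr /= fps_exp_coef_diag mulr1.
rewrite nth_rcons size_expansion_prefix ltnn eqxx.
under eq_bigr => i _ do rewrite -(nth_expansion_prefix _ (ltn_ord i)).
by rewrite addrC subrK.
Qed.

Section Valuation.
Variables (f : fps R) (a : nat -> R) (j : nat).
Hypotheses (fa : is_expansion g f a) (f_lt : forall m, (m < j)%N -> f m = 0).

Lemma expansion_coef_lt i : (i < j)%N -> a i = 0.
Proof.
elim/ltn_ind: i => i IH lt_ij.
rewrite (expansion_coef_rec fa) f_lt // big1 ?subr0 // => -[t ht] _.
by rewrite IH ?mul0r //=; lia.
Qed.

Lemma expansion_coef_val : a j = f j.
Proof.
rewrite (expansion_coef_rec fa) big1 ?subr0 // => t _.
by rewrite expansion_coef_lt ?mul0r.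
Qed.

Lemma expansion_coef_val_succ : a j.+1 = f j.+1 - f j * (j%:R * g 2%N).
Proof.
rewrite (expansion_coef_rec fa) big_ord_recr /= big1 ?add0r.
  by rewrite expansion_coef_val fps_exp_coef_succ.
by move=> t _; rewrite expansion_coef_lt ?mul0r.
Qed.

End Valuation.
End PositiveValuation.

Lemma fps_exp_X j m : fps_exp (fps_X R) j m = (m == j)%:R.
Proof.
elim: j m => [|j IH] m; first by rewrite /= /fps_one.
rewrite fps_expS /fps_mul big_ord_recl /= {1}/fps_X /= mul0r add0r.
case: m => [|m]; first by rewrite big_ord0.
rewrite big_ord_recl /= {1}/fps_X /= mul1r subn1 IH big1 ?addr0 //.
by move=> t _; rewrite /fps_X /= mul0r.
Qed.

Lemma fps_mul_Xn_lt j h m : (m < j)%N -> fps_mul (fps_exp (fps_X R) j) h m = 0.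
Proof.
move=> lt_mj; rewrite /fps_mul big1 // => -[t ht] _.
by rewrite fps_exp_X (_ : (t == j :> nat) = false) ?mul0r //=; lia.
Qed.

Lemma fps_mul_Xn_ge j h m :
  (j <= m)%N -> fps_mul (fps_exp (fps_X R) j) h m = h (m - j)%N.
Proof.
move=> le_jm; rewrite /fps_mul (bigD1 (@Ordinal m.+1 j le_jm)) //= big1.
  by rewrite fps_exp_X eqxx mul1r addr0.
move=> t ne_tj; rewrite fps_exp_X (_ : (t == j :> nat) = false) ?mul0r //.
by apply/negbTE; apply: contra ne_tj => /eqP e; apply/eqP/val_inj.
Qed.

Lemma inv_lin0 q : inv_lin R q 0 = 1.
Proof. exact: expr0. Qed.

Lemma gser_coefs q :
  [/\ gser R q 0 = 0, gser R q 1 = 1 & gser R q 2 = 1 - 2 * q%:R].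
Proof.
rewrite /gser fps_mul0 fps_mul1 fps_mul2.
rewrite fps_exp_coef0 ?fps_exp_coef1 ?inv_lin0 //.
by rewrite /inv_lin expr1 /=; split; ring.
Qed.

End PowerSeries.

Theorem lemma2 (R : realFieldType) (q n k : nat)
  (hq : (2 <= q)%N) (hn : (1 <= n)%N) :
  (exists a : nat -> R, is_alpha q n k.+1 a) /\
  (forall a : nat -> R, is_alpha q n k.+1 a ->
     a k.+2 = k.+1%:R * (2 * q%:R - 1) - (q%:R - 1) * n%:R).
Proof.
have [g0 g1 g2] := gser_coefs R q.
split; first exact: expansion_exists.
move=> a fa; have f_lt m : (m < k.+1)%N -> fser R q n k.+1 m = 0.
  exact: fps_mul_Xn_lt.
rewrite (expansion_coef_val_succ g0 g1 fa f_lt) g2.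
rewrite /fser !fps_mul_Xn_ge // subnn subSnn.
rewrite fps_exp_coef0 ?fps_exp_coef1 ?inv_lin0 // /inv_lin expr1; ring.
Qed.
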